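(* Let $G$ be a weak directed $st$-graph. Then in every complete chain of minimal vertex separators $T_0,T_1,\ldots,T_n$ of $G$ there exists some $T_i$ that contains a critical node.
   Context: A directed $st$-graph $G=(V,E,s,t)$ is a finite directed graph with no self-loops and no parallel edges, with distinct source $s$ (no incoming edges) and sink $t$ (no outgoing edges), such that every vertex lies on some directed walk from $s$ to $t$. Channels: a charge function $\eta:V\to\mathbb{N}\cup\{\infty\}$ with $\eta(s)=\eta(t)=\infty$; a flow for $\eta$ is a finitely supported $\phi$ from the set of $s$–$t$ walks to $\mathbb{N}$ with $\sum_p m_v(p)\phi(p)\le\eta(v)$ for every $v$ ($m_v(p)$ = number of occurrences of $v$ in $p$); value $\sum_p\phi(p)$; $\max_\eta$ = maximum value; $\phi$ inhibits $\eta$ if after subtracting $\phi$'s consumption from $\eta$ no positive-value flow exists; $\min_\eta$ = minimum value of an inhibiting flow; $G$ is weak if $\min_\eta\ne\max_\eta$ for some $\eta$. A vertex separator is a set $T\subseteq V$ meeting every $s$–$t$ walk; an mvs is an inclusion-minimal one. For $u\in V$, $A\subseteq V$: $u\sqsubseteq A$ if every directed walk from $u$ to $t$ contains a vertex of $A$; for $A,A'\subseteq V$, $A\sqsubseteq A'$ if $u\sqsubseteq A'$ for all $u\in A$, and $A\sqsubset A'$ means $A\sqsubseteq A'$ and $A\ne A'$. A sequence of mvs's $T_0,\ldots,T_n$ is a complete chain if $T_0=\{s\}$, $T_n=\{t\}$, $T_i\sqsubset T_{i+1}$ for all $i$, and for every mvs $T$ and every $i$, $T_i\sqsubseteq T\sqsubseteq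 T_{i+1}$ implies $T=T_i$ or $T=T_{i+1}$. A vertex $b$ is a critical node if there exist an mvs $T$ and $a\in T$ with $b\in T$ and a directed walk of length at least one from $a$ to $b$ ($a=b$ allowed). *)

From mathcomp Require Import all_boot finset.
Set Implicit Arguments. Unset Strict Implicit. Unset Printing Implicit Defensive.

Section StGraphs.
Variables (V : finType) (E : rel V).

(* A directed walk from x to y: a non-empty vertex sequence x :: q following
   edges of E and ending at y.  Its length is size q. *)
Definition walk_from_to (x y : V) (p : seq V) : Prop :=
  exists q, p = x :: q /\ path E x q /\ last x q = y.

(* directed st-graph: no self-loops (E is a rel, so no parallel edges),
   s <> t, s has no incoming edges, t no outgoing edges, and every vertex
   lies on a directed walk from s to t. *)
Definition st_graph (s t : V) : Prop :=
  [/\ irreflexive E, s != t, (forall u, ~~ E u s), (forall u, ~~ E t u)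
    & forall v, exists p, walk_from_to s t p /\ v \in p].

(* Charges: values in N ∪ {∞}, with None = ∞. *)
Definition charge := V -> option nat.
Definition le_ext (k : nat) (e : option nat) : bool :=
  if e is Some n then k <= n else true.
Definition sub_ext (e : option nat) (k : nat) : option nat :=
  if e is Some n then Some (n - k) else None.
Definition valid_charge (s t : V) (eta : charge) : Prop :=
  eta s = None /\ eta t = None.

(* A flow (finitely supported map from s-t walks to N) is represented as the
   finite multiset (list) of s-t walks, each walk listed phi(p) times. *)
Definition flow := seq (seq V).
Definition consumption (phi : flow) (v : V) : nat :=
  \sum_(p <- phi) count_mem v p.
Definition flow_value (phi : flow) : nat := size phi.
Definition is_flow (s t : V) (eta : charge) (phi : flow) : Prop :=
  (forall p, p \in phi -> walk_from_to s t p) /\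
  (forall v, le_ext (consumption phi v) (eta v)).

Definition residual (eta : charge) (phi : flow) : charge :=
  fun v => sub_ext (eta v) (consumption phi v).

Definition inhibits (s t : V) (eta : charge) (phi : flow) : Prop :=
  is_flow s t eta phi /\
  ~ (exists psi, is_flow s t (residual eta phi) psi /\ 0 < flow_value psi).

Definition is_max_value (s t : V) (eta : charge) (k : nat) : Prop :=
  (exists phi, is_flow s t eta phi /\ flow_value phi = k) /\
  (forall phi, is_flow s t eta phi -> flow_value phi <= k).

Definition is_min_value (s t : V) (eta : charge) (k : nat) : Prop :=
  (exists phi, inhibits s t eta phi /\ flow_value phi = k) /\
  (forall phi, inhibits s t eta phi -> k <= flow_value phi).

Definition weak (s t : V) : Prop :=
  exists eta : charge, valid_charge s t eta /\
    exists kmin kmax, is_min_value s t eta kmin /\ is_max_value s t eta kmax /\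
      kmin <> kmax.

Definition separator (s t : V) (T : {set V}) : Prop :=
  forall p, walk_from_to s t p -> exists2 v, v \in p & v \in T.
Definition mvs (s t : V) (T : {set V}) : Prop :=
  separator s t T /\ forall T' : {set V}, T' \proper T -> ~ separator s t T'.

Definition vsqle (t u : V) (A : {set V}) : Prop :=
  forall p, walk_from_to u t p -> exists2 v, v \in p & v \in A.
Definition sqle (t : V) (A A' : {set V}) : Prop :=
  forall u, u \in A -> vsqle t u A'.
Definition sqlt (t : V) (A A' : {set V}) : Prop := sqle t A A' /\ A <> A'.

Definition complete_chain (s t : V) (n : nat) (T : nat -> {set V}) : Prop :=
  [/\ (forall i, i <= n -> mvs s t (T i)),
      T 0 = [set s], T n = [set t],
      (forall i, i < n -> sqlt t (T i) (T i.+1))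
    & (forall (X : {set V}) i, mvs s t X -> i < n ->
         sqle t (T i) X -> sqle t X (T i.+1) -> X = T i \/ X = T i.+1)].

Definition critical (s t : V) (b : V) : Prop :=
  exists (T : {set V}) (a : V), [/\ mvs s t T, a \in T, b \in T &
    exists p, walk_from_to a b p /\ 1 < size p].

End StGraphs.

From mathcomp Require Import all_boot finset boolp.
Set Implicit Arguments. Unset Strict Implicit. Unset Printing Implicit Defensive.

(* If some T_i is met twice by an s-t walk, the stretch of the walk between two
   of its vertices in T_i ends in a critical node.  Otherwise every T_i is met at
   most once by every s-t walk.  Weakness yields an mvs X met twice by some s-t
   walk: choose X inside the vertices saturated by a minimum inhibiting flow phi;
   if X were met at most once by every walk, any flow would have value at most
   the load of X, which is at most the value of phi, so max = min.  Hence X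
   contains a critical node b, and it remains to see that b lies in some T_i.
   If not, take an s-t walk l ++ b :: r meeting X only at b; it crosses from
   T_m to T_(m+1) at b, for some m.  The frontier of the vertices reachable from
   s avoiding T_m, or avoiding X and T_(m+1), is a separator containing an mvs Y
   through b with T_m ⊑ Y ⊑ T_(m+1), contradicting completeness of the chain. *)

Lemma split_find_last (T : Type) (a : pred T) s : has a s ->
  exists l x r, [/\ s = l ++ x :: r, a x & ~~ has a r].
Proof.
rewrite -has_rev => hs; rewrite -[s]revK; case/split_find: hs => x l r ax lna.
by exists (rev r), x, (rev l); rewrite rev_cat rev_rcons has_rev.
Qed.

Lemma has_setU (T : finType) (C D : {set T}) s :
  has (mem (C :|: D)) s = has (mem C) s || has (mem D) s.
Proof. by rewrite -has_predU; apply: eq_has => x; rewrite /= in_setU. Qed.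

Lemma sum_count_mem (T : finType) (X : {set T}) s :
  \sum_(v in X) count_mem v s = count (mem X) s.
Proof.
elim: s => [|x s IH] /=; first by rewrite big1.
rewrite big_split /= IH; congr (_ + _); case: (boolP (x \in X)) => xX.
  by rewrite (bigD1 x) //= eqxx big1 // => v /andP[_ /negbTE vx]; rewrite eq_sym vx.
by rewrite big1 // => v vX; case: eqP xX => // ->; rewrite vX.
Qed.

Lemma exists_switch (P : nat -> bool) n :
  P 0 -> ~~ P n -> exists m, [/\ m < n, P m & ~~ P m.+1].
Proof.
elim: n => [|n IH] P0 Pn; first by rewrite P0 in Pn.
have [Pn'|nPn'] := boolP (P n); first by exists n.
by have [m [mn Pm nPm1]] := IH P0 nPn'; exists m; split=> //; apply: ltnW.
Qed.

Lemma crossing_index (P Q : nat -> bool) n :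
  (forall i, i <= n -> P i -> ~~ Q i) -> P 0 -> Q n ->
  exists m, [/\ m < n, P m, ~~ P m.+1 & ~~ Q m].
Proof.
move=> PQ P0 Qn; have nPn : ~~ P n by apply: contraL Qn => /(PQ n (leqnn n)).
have [m [mn Pm nPm1]] := exists_switch P0 nPn.
by exists m; split=> //; apply: PQ Pm; apply: ltnW.
Qed.

Section Walks.
Variables (V : finType) (E : rel V).

Lemma walk_ends x y p : walk_from_to E x y p -> x \in p /\ y \in p.
Proof. by case=> q [-> [_ <-]]; rewrite mem_head mem_last. Qed.

Lemma walk_split x y l c r : walk_from_to E x y (l ++ c :: r) ->
  walk_from_to E x c (rcons l c) /\ walk_from_to E c y (c :: r).
Proof.
case=> q [elq]; case: l elq => [|z l] [-> <-] /=.
  by split; [exists [::] | exists r].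
rewrite cat_path last_cat /= => -[/andP[p1 /andP[e1 p2]] lq].
by split; [exists (rcons l c); rewrite rcons_path p1 e1 last_rcons | exists r].
Qed.

Lemma walk_cat x y z p q : walk_from_to E x y p -> walk_from_to E y z (y :: q) ->
  walk_from_to E x z (p ++ q).
Proof.
case=> p' [-> [pp <-]] [_ [[<-] [pq <-]]].
by exists (p' ++ q); rewrite cat_path pp pq last_cat.
Qed.

Lemma walk_rcons x u v p : walk_from_to E x u p -> E u v ->
  walk_from_to E x v (rcons p v).
Proof.
by case=> p' [-> [pp <-]] e; exists (rcons p' v); rewrite rcons_path pp e last_rcons.
Qed.

Lemma walk_infix x y l a m b r : walk_from_to E x y (l ++ a :: m ++ b :: r) ->
  walk_from_to E a b (a :: rcons m b).
Proof.
by move=> /walk_split[_] /(walk_split (l := a :: m))[]; rewrite rcons_cons.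
Qed.

Lemma walk_shorten x y p : walk_from_to E x y p ->
  exists p', [/\ walk_from_to E x y p', uniq p' & {subset p' <= p}].
Proof.
case=> q [-> [pq <-]]; case: (shortenP pq) => q' pq' uq' sub'.
exists (x :: q'); split=> //; first by exists q'.
by move=> v; rewrite !inE => /orP[->|/sub' ->]; rewrite ?orbT.
Qed.

Lemma walk_into_source s x p : (forall u, ~~ E u s) ->
  walk_from_to E x s p -> p = [:: x].
Proof.
move=> s_src [q [-> [pq lq]]]; case/lastP: q pq lq => // q u.
by rewrite rcons_path last_rcons => /andP[_ e] eu; rewrite eu (negbTE (s_src _)) in e.
Qed.

Lemma path_exit (K : V -> Prop) x q : path E x q -> K x -> ~ K (last x q) ->
  exists2 v, v \in q & ~ K v /\ exists2 u, K u & E u v.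
Proof.
elim: q x => [|y q IH] x /=; first by move=> _ Kx /(_ Kx).
case/andP=> Exy pq Kx nKl; have [Ky|nKy] := pselect (K y).
  by have [v vq hv] := IH y pq Ky nKl; exists v; rewrite // inE vq orbT.
by exists y; rewrite ?mem_head //; split=> //; exists x.
Qed.

End Walks.

Section MinimalSeparators.
Variables (V : finType) (E : rel V) (s t : V).

Lemma separator_mvs S : separator E s t S ->
  exists2 Y : {set V}, Y \subset S & mvs E s t Y.
Proof.
move=> sepS.
have [Y /minsetP[/asboolP sepY minY] YS] :=
  minset_exists (P := fun Y => `[< separator E s t Y >]) (asboolT sepS).
exists Y => //; split=> // Z /andP[ZY YnZ] sepZ.
by rewrite (minY Z (asboolT sepZ) ZY) subxx in YnZ.
Qed.

Lemma mvs_private_walk B c : mvs E s t B -> c \in B ->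
  exists p, [/\ walk_from_to E s t p, c \in p & forall v, v \in p -> v \in B -> v = c].
Proof.
case=> sepB minB cB.
have /existsNP[p /not_implyP[wp nomeet]] : ~ separator E s t (B :\ c).
  by apply: minB; rewrite properD1.
have onlyc : forall v, v \in p -> v \in B -> v = c.
  move=> v vp vB; apply: contrapT => vc; apply: nomeet; exists v => //.
  by rewrite in_setD1 vB andbT; apply/eqP.
by exists p; split=> //; have [v vp vB] := sepB p wp; rewrite -(onlyc v).
Qed.

Lemma mvs_prefix B c : mvs E s t B -> c \in B ->
  exists l, walk_from_to E s c (rcons l c) /\ ~~ has (mem B) l.
Proof.
move=> mB cB; have [p [wp cp onlyc]] := mvs_private_walk mB cB.
have hasB : has (mem B) p by apply/hasP; exists c.
move: wp onlyc; case/split_find: hasB => x l r xB lB wp onlyc.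
rewrite -(onlyc x) ?mem_cat ?mem_rcons ?mem_head //.
by rewrite cat_rcons in wp; exists l; split=> //; case: (walk_split wp).
Qed.

Lemma mvs_suffix B c : mvs E s t B -> c \in B ->
  exists r, walk_from_to E c t (c :: r) /\ ~~ has (mem B) r.
Proof.
move=> mB cB; have [p [wp cp onlyc]] := mvs_private_walk mB cB.
have [l [x [r [ep xB rB]]]] : exists l x r,
    [/\ p = l ++ x :: r, x \in B & ~~ has (mem B) r].
  by apply: split_find_last; apply/hasP; exists c.
have xc : x = c by apply: onlyc; rewrite // ep mem_cat mem_head orbT.
by subst; exists r; split=> //; case: (walk_split wp).
Qed.

Lemma mvs_met_twice_critical X p : mvs E s t X -> walk_from_to E s t p ->
  1 < count (mem X) p -> exists2 b, b \in X & critical E s t b.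
Proof.
move=> mX wp twice; have hasX : has (mem X) p by rewrite has_count ltnW.
move: wp twice; case/split_find: hasX => a l q /= aX lX.
have l0 : count (mem X) l = 0 by apply/eqP; rewrite -leqn0 leqNgt -has_count.
rewrite cat_rcons count_cat l0 /= (aX : a \in X) add0n add1n ltnS -has_count.
move=> wp /hasP[b bq bX].
case/splitPr: bq wp => m r /walk_infix wab.
exists b => //; exists X, a; split=> //.
by exists (a :: rcons m b); rewrite /= size_rcons.
Qed.

Lemma sqle_avoid A B u w : separator E s t A -> sqle E t A B -> mvs E s t B ->
  walk_from_to E s u w -> ~~ has (mem A) w -> ~~ has (mem B) w.
Proof.
move=> sepA AB mB ww wA; apply/hasP => -[c cw cB].
have [r [wr rB]] := mvs_suffix mB cB.
case/splitPr: cw ww wA => w1 w2 ww wA.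
have [wc _] := walk_split ww.
have [v] := sepA _ (walk_cat wc wr); rewrite mem_cat => /orP[vwc vA|vr vA].
  by apply: (negP wA); apply/hasP; exists v; rewrite // -cat_rcons mem_cat vwc.
case/splitPr: vr wr rB => r1 r2 wr rB.
have [_ wv] := walk_split (l := c :: r1) wr.
have [x xv xB] := AB v vA _ wv.
by apply: (negP rB); apply/hasP; exists x; rewrite // mem_cat xv orbT.
Qed.

End MinimalSeparators.

Section Flows.
Variables (V : finType) (E : rel V) (s t : V).
Implicit Types (eta : charge V) (phi psi : flow V).

Lemma sum_consumption (X : {set V}) phi :
  \sum_(v in X) consumption phi v = \sum_(p <- phi) count (mem X) p.
Proof.
by rewrite /consumption exchange_big; apply: eq_bigr => p _; apply: sum_count_mem.
Qed.

Lemma simple_walk_flow eta p : walk_from_to E s t p -> uniq p ->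
  (forall v, v \in p -> le_ext 1 (eta v)) -> is_flow E s t eta [:: p].
Proof.
move=> wp up cap; split=> [q|v]; first by rewrite inE => /eqP ->.
rewrite /consumption big_seq1; have [vp|vnp] := boolP (v \in p).
  by rewrite (count_uniq_mem _ up) vp; apply: cap.
by rewrite (count_memPn vnp); case: (eta v).
Qed.

Lemma inhibiting_saturated_separator eta phi : inhibits E s t eta phi ->
  separator E s t [set v | residual eta phi v == Some 0].
Proof.
case=> _ noflow p wp; apply: contrapT => avoid; apply: noflow.
have [q [wq uq qp]] := walk_shorten wp.
exists [:: q]; split=> //; apply: simple_walk_flow => // v /qp vp.
have : v \notin [set v | residual eta phi v == Some 0].
  by apply/negP => vZ; apply: avoid; exists v.
by rewrite inE; case: residual => [[|k]|].
Qed.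

Lemma consumption_le_saturated eta phi psi v : is_flow E s t eta psi ->
  residual eta phi v = Some 0 -> consumption psi v <= consumption phi v.
Proof.
case=> _ /(_ v); rewrite /residual; case: (eta v) => //= k le_psi [/eqP].
by rewrite subn_eq0; apply: leq_trans.
Qed.

Lemma flow_value_le_load (X : {set V}) eta phi : separator E s t X ->
  is_flow E s t eta phi -> flow_value phi <= \sum_(v in X) consumption phi v.
Proof.
move=> sepX [walks _]; rewrite sum_consumption /flow_value -sum1_size.
rewrite big_seq [X in _ <= X]big_seq; apply: leq_sum => p /walks /sepX[v vp vX].
by rewrite -has_count; apply/hasP; exists v.
Qed.

Lemma load_le_flow_value (X : {set V}) eta phi :
  (forall p, walk_from_to E s t p -> count (mem X) p <= 1) ->
  is_flow E s t eta phi -> \sum_(v in X) consumption phi v <= flow_value phi.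
Proof.
move=> once [walks _]; rewrite sum_consumption /flow_value -sum1_size.
by rewrite big_seq [X in _ <= X]big_seq; apply: leq_sum => p /walks /once.
Qed.

Lemma weak_mvs_met_twice : weak E s t -> exists2 X, mvs E s t X &
  exists2 p, walk_from_to E s t p & 1 < count (mem X) p.
Proof.
case=> eta [_ [_ [_ [[[phi [inh <-]] _] [[[psi [fpsi <-]] maxp] ne]]]]].
have [X XZ mX] := separator_mvs (inhibiting_saturated_separator inh).
exists X => //; apply: contrapT => once; apply: ne; apply/eqP.
rewrite eqn_leq (maxp _ inh.1) /=; apply: (leq_trans (flow_value_le_load mX.1 fpsi)).
apply: (@leq_trans (\sum_(v in X) consumption phi v)).
  apply: leq_sum => v /(subsetP XZ); rewrite inE => /eqP.
  exact: consumption_le_saturated fpsi.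
apply: load_le_flow_value inh.1 => p wp; rewrite leqNgt.
by apply/negP => twice; apply: once; exists p.
Qed.

End Flows.

Section Frontier.
Variables (V : finType) (E : rel V) (s t : V).

Definition reach_avoiding (C : {set V}) (v : V) : Prop :=
  exists2 w, walk_from_to E s v w & ~~ has (mem C) w.

Definition frontier (K : V -> Prop) : {set V} :=
  [set v | `[< ~ K v /\ (v = s \/ exists2 u, K u & E u v) >]].

Lemma frontierP K v :
  reflect (~ K v /\ (v = s \/ exists2 u, K u & E u v)) (v \in frontier K).
Proof. by rewrite inE; apply: asboolP. Qed.

Lemma frontier_separator K : ~ K t -> separator E s t (frontier K).
Proof.
move=> nKt p [q [-> [pq lq]]]; have [Ks|nKs] := pselect (K s); last first.
  by exists s; rewrite ?mem_head //; apply/frontierP; split=> //; left.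
have [|v vq [nKv [u Ku Euv]]] := path_exit pq Ks; first by rewrite lq.
exists v; first by rewrite inE vq orbT.
by apply/frontierP; split=> //; right; exists u.
Qed.

Lemma reach_avoidingS (C D : {set V}) v :
  C \subset D -> reach_avoiding D v -> reach_avoiding C v.
Proof.
move=> CD [w ww wD]; exists w => //; move: wD; apply: contra => /hasP[x xw xC].
by apply/hasP; exists x; last exact: subsetP CD x xC.
Qed.

Lemma separator_unreachable (C : {set V}) : separator E s t C -> ~ reach_avoiding C t.
Proof. by move=> sepC [w /sepC[v vw vC]]; case/negP; apply/hasP; exists v. Qed.

Lemma reach_avoiding_prefix (C : {set V}) y l r v : walk_from_to E s y (l ++ r) ->
  v \in l -> ~~ has (mem C) l -> reach_avoiding C v.
Proof.
move=> w vl lC; case/splitPr: vl w lC => l1 l2; rewrite -catA /=.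
move=> /walk_split[wv _] lC; exists (rcons l1 v) => //; move: lC; apply: contra.
by rewrite has_rcons has_cat /= => /orP[] ->; rewrite ?orbT.
Qed.

Lemma reach_edge_meets (C : {set V}) u v q : separator E s t C -> reach_avoiding C u ->
  E u v -> walk_from_to E v t (v :: q) -> has (mem C) (v :: q).
Proof.
move=> sepC [w ww wC] Euv wq; have [x] := sepC _ (walk_cat (walk_rcons ww Euv) wq).
rewrite cat_rcons mem_cat => /orP[xw xC|xq xC]; last by apply/hasP; exists x.
by case/negP: wC; apply/hasP; exists x.
Qed.

End Frontier.

Section Between.
Variables (V : finType) (E : rel V) (s t : V).
Hypothesis s_source : forall u, ~~ E u s.
Variables (A B X : {set V}) (l r : seq V) (b : V).
Hypotheses (mA : mvs E s t A) (mB : mvs E s t B) (AB : sqle E t A B)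
  (sepX : separator E s t X) (wb : walk_from_to E s t (l ++ b :: r))
  (lB : ~~ has (mem B) l) (lX : ~~ has (mem X) l)
  (rA : ~~ has (mem A) r) (rX : ~~ has (mem X) r).

(* The pivot b lies on the frontier of K: l runs inside K, and no edge leaves
   K into r, which avoids both A and X. *)
Let K v := reach_avoiding E s A v \/ reach_avoiding E s (X :|: B) v.

Lemma frontier_mem_pivot (Y : {set V}) :
  Y \subset frontier E s K -> separator E s t Y -> b \in Y.
Proof.
move=> YK sepY; have [v vp vY] := sepY _ wb.
have /frontierP[nKv Kpred] := subsetP YK v vY.
move: vp; rewrite mem_cat inE => /or3P[vl|/eqP<- //|vr]; exfalso.
  apply: nKv; right; apply: reach_avoiding_prefix wb vl _.
  by rewrite has_setU negb_or lX.
case/splitPr: vr wb rA rX => r1 r2 w rA' rX'.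
have /walk_split[wsv wvt] : walk_from_to E s t ((l ++ b :: r1) ++ v :: r2).
  by rewrite -catA.
case: Kpred => [vs|[u [Au|XBu] Euv]].
- move: wsv; rewrite vs => /(walk_into_source s_source)/(congr1 size).
  by rewrite size_rcons size_cat addnS.
- by rewrite has_cat (reach_edge_meets mA.1 Au Euv wvt) orbT in rA'.
- have Xu := reach_avoidingS (subsetUl X B) XBu.
  by rewrite has_cat (reach_edge_meets sepX Xu Euv wvt) orbT in rX'.
Qed.

Lemma sqle_frontier (Y : {set V}) :
  Y \subset frontier E s K -> separator E s t Y -> sqle E t A Y.
Proof.
move=> YK sepY a aA p wp; have [la [wla laA]] := mvs_prefix mA aA.
case: (wp) => q [ep _]; rewrite ep in wp *.
have w := walk_cat wla wp; rewrite cat_rcons in w.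
have [v] := sepY _ w; rewrite mem_cat => /orP[vla vY|]; last by exists v.
have /frontierP[nKv _] := subsetP YK v vY.
by case: nKv; left; apply: reach_avoiding_prefix w vla laA.
Qed.

Lemma frontier_sqle (Y : {set V}) : Y \subset frontier E s K -> sqle E t Y B.
Proof.
move=> YK y /(subsetP YK)/frontierP[_ [->|[u Ku Euy]]] p wp; first exact: mB.1.
have uB : reach_avoiding E s B u.
  case: Ku => [[w ww wA]|XBu]; last exact: reach_avoidingS (subsetUr X B) XBu.
  by exists w => //; apply: sqle_avoid mA.1 AB mB ww wA.
case: (wp) => q [ep _]; rewrite ep in wp *.
by case/hasP: (reach_edge_meets mB.1 uB Euy wp) => v; exists v.
Qed.

Lemma mvs_between :
  exists2 Y, mvs E s t Y & [/\ b \in Y, sqle E t A Y & sqle E t Y B].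
Proof.
have nKt : ~ K t.
  by case=> [/(separator_unreachable mA.1)|
    /(reach_avoidingS (subsetUl X B))/(separator_unreachable sepX)].
have [Y YK mY] := separator_mvs (@frontier_separator _ E s t K nKt).
exists Y => //; split; [exact: frontier_mem_pivot YK mY.1 |
  exact: sqle_frontier YK mY.1 | exact: frontier_sqle YK].
Qed.

End Between.

Lemma chain_covers_mvs (V : finType) (E : rel V) (s t : V) n T (X : {set V}) b :
  (forall u, ~~ E u s) -> complete_chain E s t n T ->
  (forall i, i <= n -> forall p, walk_from_to E s t p -> count (mem (T i)) p <= 1) ->
  mvs E s t X -> b \in X -> exists2 i, i <= n & b \in T i.
Proof.
move=> s_src [mT T0 Tn ltT between] once mX bX; apply: contrapT => nb.
have nbT i : i <= n -> b \notin T i.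
  by move=> le_in; apply/negP => bT; apply: nb; exists i.
have [l [wl lX]] := mvs_prefix mX bX; have [r [wr rX]] := mvs_suffix mX bX.
have wb := walk_cat wl wr; rewrite cat_rcons in wb.
have sides i : i <= n -> has (mem (T i)) l -> ~~ has (mem (T i)) r.
  move=> le_in; have := once i le_in _ wb.
  rewrite count_cat /= (negbTE (nbT i le_in)) add0n !has_count -leqNgt => h1 h2.
  by rewrite -(leq_add2l (count (mem (T i)) l)) addn0 (leq_trans h1 h2).
have sl : has (mem (T 0)) l.
  apply/hasP; exists s; last by rewrite /= T0 set11.
  move: (walk_ends wl).1; rewrite mem_rcons inE => /orP[/eqP sb|//].
  by move: (nbT 0 (leq0n n)); rewrite T0 sb set11.
have tr : has (mem (T n)) r.
  apply/hasP; exists t; last by rewrite /= Tn set11.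
  move: (walk_ends wr).2; rewrite inE => /orP[/eqP tb|//].
  by move: (nbT n (leqnn n)); rewrite Tn tb set11.
have [m [mn lm lm1 rm]] := crossing_index sides sl tr.
have [Y mY [bY AY YB]] :=
  mvs_between s_src (mT m (ltnW mn)) (mT m.+1 mn) (ltT m mn).1 mX.1 wb lm1 lX rm rX.
case: (between Y m mY mn AY YB) => eY.
  by case/negP: (nbT m (ltnW mn)); rewrite -eY.
by case/negP: (nbT m.+1 mn); rewrite -eY.
Qed.

Theorem theorem2 (V : finType) (E : rel V) (s t : V) :
  st_graph E s t -> weak E s t ->
  forall (n : nat) (T : nat -> {set V}), complete_chain E s t n T ->
  exists i, i <= n /\ exists2 b, b \in T i & critical E s t b.
Proof.
move=> [_ _ s_src _ _] hw n T chain.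
have mT i : i <= n -> mvs E s t (T i) by case: chain => mT _ _ _ _; apply: mT.
have [[i [le_in [p wp twice]]]|once] := pselect (exists i, i <= n /\
    exists2 p, walk_from_to E s t p & 1 < count (mem (T i)) p).
  have [b bT crit] := mvs_met_twice_critical (mT i le_in) wp twice.
  by exists i; split=> //; exists b.
have [X mX [p wp twice]] := weak_mvs_met_twice hw.
have [b bX crit] := mvs_met_twice_critical mX wp twice.
have [i le_in bT] : exists2 i, i <= n & b \in T i.
  apply: chain_covers_mvs s_src chain _ mX bX => i le_in q wq.
  by rewrite leqNgt; apply/negP => tw; apply: once; exists i; split=> //; exists q.
by exists i; split=> //; exists b.
Qed.
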